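(* Let $T=(L,R,\tau)$ be a rewrite rule without cloning (i.e. $L,R$ are termgraphs and $\tau:|L|\to|R|$ is a total function) and let $m:L\to G$ be a graph morphism such that $|m|$ is injective. Then there exists a heterogeneous pushout of $T$ and $m$, i.e. an initial object in the category of heterogeneous cones over $T$ and $m$. Moreover, if $(\mathcal{H},\tau_1,\delta)$ is a pushout of $\tau$ and $|m|$ in the category of sets (so $\delta\circ\tau=\tau_1\circ|m|$ with $\tau_1:|G|\to\mathcal{H}$, $\delta:|R|\to\mathcal{H}$), then there is a unique graph $H$ with set of nodes $\mathcal{H}$ such that $\tau_1$ is strictly graphic on $|G|-|m(L)|$ and $\delta$ is strictly graphic on $|R|$; $\delta$ underlies a graph morphism $d:R\to H$, and $(H,\tau_1,d)$ is a heterogeneous pushout of $T$ and $m$.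
   Context: A signature $\Omega$ assigns an arity $\mathrm{ar}(\omega)\in\mathbb{N}$ to each symbol. For a function $f$, $f^*$ acts letterwise on strings. A termgraph (graph) $G=(\mathcal{N}_G,\mathcal{D}_G,\mathcal{L}_G,\mathcal{S}_G)$ has node set $|G|=\mathcal{N}_G$, labeled nodes $\mathcal{D}_G\subseteq\mathcal{N}_G$, labeling $\mathcal{L}_G:\mathcal{D}_G\to\Omega$ and successors $\mathcal{S}_G:\mathcal{D}_G\to\mathcal{N}_G^*$ with $|\mathcal{S}_G(n)|=\mathrm{ar}(\mathcal{L}_G(n))$. A graph morphism $g:G\to H$ is a function $g:|G|\to|H|$ with $g(\mathcal{D}_G)\subseteq\mathcal{D}_H$ and, for each labeled $n$, $\mathcal{L}_H(g(n))=\mathcal{L}_G(n)$ and $\mathcal{S}_H(g(n))=g^*(\mathcal{S}_G(n))$ (unlabeled nodes may map anywhere). A function $\gamma:|G|\to|H|$ is graphic at $n$ if $n$ is unlabeled or both $n,\gamma(n)$ are labeled with $\mathcal{L}_H(\gamma(n))=\mathcal{L}_G(n)$, $\mathcal{S}_H(\gamma(n))=\gamma^*(\mathcal{S}_G(n))$; strictly graphic at $n$ if both $n,\gamma(n)$ are unlabeled or both are labeled with these two equalities; (strictly) graphic on a set if so at each of its nodes. A rewrite rule without cloning is $T=(L,R,\tau)$ with $\tau:|L|\to|R|$ a function; a morphism of such rules $(L,R,\tau)\to(L_1,R_1,\tau_1)$ is a pair of graph morphisms $m:L\to L_1$, $d:R\to R_1$ with $|d|\circ\tau=\tau_1\circ|m|$.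 A heterogeneous cone over $T$ and $m:L\to G$ is a triple $(H,\tau_1,d)$ with $H$ a graph, $\tau_1:|G|\to|H|$ a function, $d:R\to H$ a graph morphism, such that $|d|\circ\tau=\tau_1\circ|m|$ and $\tau_1$ is graphic on $|G|-|m(L)|$. A morphism of heterogeneous cones $(H,\tau_1,d)\to(H',\tau_1',d')$ is a graph morphism $h:H\to H'$ with $|h|\circ\tau_1=\tau_1'$ and $h\circ d=d'$. *)

From mathcomp Require Import all_boot.
Set Implicit Arguments. Unset Strict Implicit. Unset Printing Implicit Defensive.

Record signature := Signature { sym : Type; ar : sym -> nat }.

(* A termgraph over node type N: each node is either unlabeled (None) or
   labeled by a symbol together with its successor string, whose length is
   the arity of the symbol.  D_G = {n | glab n <> None}. *)
Record graph (S : signature) (N : Type) := Graph {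
  glab : N -> option (sym S * seq N);
  gwf : forall n s l, glab n = Some (s, l) -> size l = ar s }.

Section Defs.
Variable S : signature.

Definition is_morph (N1 N2 : Type) (G : graph S N1) (H : graph S N2)
  (g : N1 -> N2) : Prop :=
  forall n s l, glab G n = Some (s, l) -> glab H (g n) = Some (s, map g l).

Definition graphic_at (N1 N2 : Type) (G : graph S N1) (H : graph S N2)
  (gamma : N1 -> N2) (n : N1) : Prop :=
  glab G n = None \/
  exists s l, glab G n = Some (s, l) /\ glab H (gamma n) = Some (s, map gamma l).

Definition strictly_graphic_at (N1 N2 : Type) (G : graph S N1) (H : graph S N2)
  (gamma : N1 -> N2) (n : N1) : Prop :=
  (glab G n = None /\ glab H (gamma n) = None) \/
  exists s l, glab G n = Some (s, l) /\ glab H (gamma n) = Some (s, map gamma l).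

Definition outside_image (NL NG : Type) (m : NL -> NG) (n : NG) : Prop :=
  ~ exists x, m x = n.

Definition het_cone (NL NR NG NH : Type) (L : graph S NL) (R : graph S NR)
  (G : graph S NG) (tau : NL -> NR) (m : NL -> NG)
  (H : graph S NH) (tau1 : NG -> NH) (d : NR -> NH) : Prop :=
  is_morph R H d /\
  (forall x, d (tau x) = tau1 (m x)) /\
  (forall n, outside_image m n -> graphic_at G H tau1 n).

Definition het_cone_morph (NR NG NH NH' : Type)
  (H : graph S NH) (tau1 : NG -> NH) (d : NR -> NH)
  (H' : graph S NH') (tau1' : NG -> NH') (d' : NR -> NH') (h : NH -> NH') : Prop :=
  is_morph H H' h /\ (forall n, h (tau1 n) = tau1' n) /\ (forall r, h (d r) = d' r).

Definition het_pushout (NL NR NG NH : Type) (L : graph S NL) (R : graph S NR)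
  (G : graph S NG) (tau : NL -> NR) (m : NL -> NG)
  (H : graph S NH) (tau1 : NG -> NH) (d : NR -> NH) : Prop :=
  het_cone L R G tau m H tau1 d /\
  forall (NH' : Type) (H' : graph S NH') (tau1' : NG -> NH') (d' : NR -> NH'),
    het_cone L R G tau m H' tau1' d' ->
    (exists h, het_cone_morph H tau1 d H' tau1' d' h) /\
    (forall h1 h2, het_cone_morph H tau1 d H' tau1' d' h1 ->
                   het_cone_morph H tau1 d H' tau1' d' h2 -> forall x, h1 x = h2 x).

End Defs.

Definition set_pushout (A B C NH : Type) (tau : A -> B) (f : A -> C)
  (tau1 : C -> NH) (delta : B -> NH) : Prop :=
  (forall x, delta (tau x) = tau1 (f x)) /\
  forall (X : Type) (g1 : C -> X) (g2 : B -> X),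
    (forall x, g2 (tau x) = g1 (f x)) ->
    (exists u : NH -> X, (forall c, u (tau1 c) = g1 c) /\ (forall b, u (delta b) = g2 b)) /\
    (forall u v : NH -> X,
       (forall c, u (tau1 c) = g1 c) -> (forall b, u (delta b) = g2 b) ->
       (forall c, v (tau1 c) = g1 c) -> (forall b, v (delta b) = g2 b) ->
       forall h, u h = v h).

From mathcomp Require Import all_boot.
From Stdlib Require Import ClassicalEpsilon PropExtensionality ProofIrrelevance.
Set Implicit Arguments. Unset Strict Implicit.

(* Because |m| is injective, the set pushout of tau and |m| is the disjoint
   union of R and |G| - |m(L)|: delta is injective, tau1 is injective on
   |G| - |m(L)|, and the two images are disjoint and cover the pushout.  So
   there is exactly one way to label the pushout making delta strictly graphic
   on |R| and tau1 strictly graphic on |G| - |m(L)|.  For a heterogeneous cone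
   (H', tau1', d') the set-theoretic mediating map u is then a graph morphism:
   on the image of delta because d' is one, on the rest because tau1' is
   graphic there.  Existence follows by applying this to the concrete pushout
   R + (|G| - |m(L)|). *)

Definition map_label (S : signature) (A B : Type) (f : A -> B) :
  option (sym S * seq A) -> option (sym S * seq B) :=
  omap (fun sl => (sl.1, map f sl.2)).

Lemma map_label_wf (S : signature) (A B : Type) (G : graph S A) (f : A -> B) n s l :
  map_label f (glab G n) = Some (s, l) -> size l = ar s.
Proof.
case E: (glab G n) => [[s' l']|] //= [<- <-].
by rewrite size_map (gwf E).
Qed.

Section GraphicMaps.
Variables (S : signature) (A B C : Type) (G : graph S A) (H : graph S B).

Lemma strictly_graphic_atE (f : A -> B) n :
  strictly_graphic_at G H f n <-> glab H (f n) = map_label f (glab G n).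
Proof.
rewrite /strictly_graphic_at; case: (glab G n) => [[s l]|] /=; split.
- by case=> [[//]|[s' [l' [[<- <-] ->]]]].
- by move=> E; right; exists s, l.
- by case=> [[_ ->]|[s' [l' [//]]]].
- by move=> E; left.
Qed.

Lemma strictly_graphic_at_graphic (f : A -> B) n :
  strictly_graphic_at G H f n -> graphic_at G H f n.
Proof. by case=> [[? _]|?]; [left|right]. Qed.

Lemma is_morph_strictly_graphic (f : A -> B) :
  (forall n, strictly_graphic_at G H f n) -> is_morph G H f.
Proof. by move=> sf n s l E; move: (sf n) => /strictly_graphic_atE ->; rewrite E. Qed.

Lemma is_morph_graphic (f : A -> B) n : is_morph G H f -> graphic_at G H f n.
Proof.
move=> mf; rewrite /graphic_at; case E: (glab G n) => [[s l]|]; last by left.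
by right; exists s, l; split=> //; apply: mf.
Qed.

Lemma morph_at_strictly_graphic_image (H' : graph S C) (f : A -> B) (g : A -> C)
  (u : B -> C) n :
  strictly_graphic_at G H f n -> graphic_at G H' g n -> (forall x, u (f x) = g x) ->
  forall s l, glab H (f n) = Some (s, l) -> glab H' (u (f n)) = Some (s, map u l).
Proof.
move=> /strictly_graphic_atE -> [gn|[s' [l' [Gn H'g]]]] ufg s l; first by rewrite gn.
rewrite Gn /= => -[<- <-]; rewrite ufg H'g -map_comp.
by congr (Some (_, _)); apply: eq_map => x; rewrite /= ufg.
Qed.

End GraphicMaps.

Section SetPushout.
Variables (A B C X : Type) (tau : A -> B) (f : A -> C) (tau1 : C -> X) (delta : B -> X).
Hypothesis P : set_pushout tau f tau1 delta.

Lemma set_pushout_predicate (p1 : C -> Prop) (p2 : B -> Prop) :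
  (forall a, p2 (tau a) <-> p1 (f a)) ->
  exists u : X -> Prop, (forall c, u (tau1 c) = p1 c) /\ (forall b, u (delta b) = p2 b).
Proof.
move=> p12; have [[u [u1 u2]] _] := P.2 Prop p1 p2 (fun a => propositional_extensionality _ _ (p12 a)).
by exists u.
Qed.

Lemma set_pushout_point_indicator c : outside_image f c ->
  exists u : X -> Prop, (forall c', u (tau1 c') = (c' = c)) /\ (forall b, u (delta b) = False).
Proof.
move=> cout; apply: set_pushout_predicate => a.
by split=> // fac; apply: cout; exists a.
Qed.

Lemma set_pushout_disjoint c b : outside_image f c -> tau1 c <> delta b.
Proof.
move=> /set_pushout_point_indicator [u [u1 u2]] E.
by have := u1 c; rewrite E u2 => ->.
Qed.

Lemma set_pushout_inj_outside c c' : outside_image f c -> tau1 c' = tau1 c -> c' = c.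
Proof.
move=> /set_pushout_point_indicator [u [u1 _]] E.
by have := u1 c'; rewrite E u1 => <-.
Qed.

Lemma set_pushout_cover x :
  (exists b, delta b = x) \/ exists c, outside_image f c /\ tau1 c = x.
Proof.
pose covered y := (exists b, delta b = y) \/ exists c, outside_image f c /\ tau1 c = y.
have [_ uniq] := P.2 Prop (fun _ => True) (fun _ => True) (fun _ => erefl).
rewrite -/(covered x) -(uniq (fun _ => True) covered) //; move=> y;
  apply: propositional_extensionality; split=> // _.
- have [[a <-]|yout] := classic (exists a, f a = y); last by right; exists y.
  by left; exists (tau a); rewrite P.1.
- by left; exists y.
Qed.

Lemma set_pushout_inj_delta : injective f -> injective delta.
Proof.
move=> finj b b' E.
have [|u [_ u2]] := @set_pushout_predicate
  (fun c => exists a, f a = c /\ tau a = b') (fun b'' => b'' = b').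
  move=> a; split=> [tab|[a' [/finj <- //]]]; by exists a.
by have := u2 b; rewrite E u2 => <-.
Qed.

End SetPushout.

Section StrictExtension.
Variables (S : signature) (NL NR NG NH : Type) (L : graph S NL) (R : graph S NR)
  (G : graph S NG) (tau : NL -> NR) (m : NL -> NG) (tau1 : NG -> NH) (delta : NR -> NH).
Hypothesis P : set_pushout tau m tau1 delta.

Definition strict_extension (H : graph S NH) : Prop :=
  (forall n, outside_image m n -> strictly_graphic_at G H tau1 n) /\
  (forall r, strictly_graphic_at R H delta r).

Lemma strict_extension_unique (H H' : graph S NH) :
  strict_extension H -> strict_extension H' -> forall x, glab H' x = glab H x.
Proof.
move=> [Hout Hr] [H'out H'r] x.
have [[r <-]|[n [nout <-]]] := set_pushout_cover P x.
- by move: (Hr r) (H'r r) => /strictly_graphic_atE -> /strictly_graphic_atE ->.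
- by move: (Hout n nout) (H'out n nout) => /strictly_graphic_atE -> /strictly_graphic_atE ->.
Qed.

Lemma strict_extension_het_pushout (H : graph S NH) :
  strict_extension H -> het_pushout L R G tau m H tau1 delta.
Proof.
move=> [Hout Hr]; split.
  split; first exact: is_morph_strictly_graphic.
  by split=> [|n nout]; [exact: P.1|exact/strictly_graphic_at_graphic/Hout].
move=> NH' H' tau1' d' [d'morph [d'comm tau1'graphic]].
have [[u [u1 u2]] uniq] := P.2 NH' tau1' d' d'comm.
split; last by move=> h1 h2 [_ [h11 h12]] [_ [h21 h22]]; apply: uniq.
exists u; split=> [x s l|//].
have [[r <-]|[n [nout <-]]] := set_pushout_cover P x => Hx.
- exact: (morph_at_strictly_graphic_image (Hr r) (is_morph_graphic r d'morph) u2 Hx).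
- exact: (morph_at_strictly_graphic_image (Hout n nout) (tau1'graphic n nout) u1 Hx).
Qed.

End StrictExtension.

Section PushoutGraph.
Variables (S : signature) (NL NR NG NH : Type) (R : graph S NR) (G : graph S NG)
  (m : NL -> NG) (tau1 : NG -> NH) (delta : NR -> NH).

Definition pushout_label (x : NH) : option (sym S * seq NH) :=
  match excluded_middle_informative (exists r, delta r = x) with
  | left e => map_label delta (glab R (proj1_sig (constructive_indefinite_description _ e)))
  | right _ =>
    match excluded_middle_informative (exists n, outside_image m n /\ tau1 n = x) with
    | left e => map_label tau1 (glab G (proj1_sig (constructive_indefinite_description _ e)))
    | right _ => None
    end
  end.

Lemma pushout_label_wf x s l : pushout_label x = Some (s, l) -> size l = ar s.
Proof.
rewrite /pushout_label; case: excluded_middle_informative => [e|_]; first exact: map_label_wf.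
by case: excluded_middle_informative => [e|//]; apply: map_label_wf.
Qed.

Definition pushout_graph : graph S NH := Graph pushout_label_wf.

Variable tau : NL -> NR.
Hypotheses (P : set_pushout tau m tau1 delta) (minj : injective m).

Lemma pushout_graph_strict_extension : strict_extension R G m tau1 delta pushout_graph.
Proof.
split=> [n nout|r]; apply/strictly_graphic_atE; rewrite /= /pushout_label.
- case: excluded_middle_informative => [[r /esym /(set_pushout_disjoint P nout)] //|_].
  case: excluded_middle_informative => [e|]; last by case; exists n.
  by case: constructive_indefinite_description => n' /= [_ /(set_pushout_inj_outside P nout) ->].
- case: excluded_middle_informative => [e|]; last by case; exists r.
  by case: constructive_indefinite_description => r' /= /(set_pushout_inj_delta P minj) ->.
Qed.

End PushoutGraph.

Section SumPushout.
Variables (A B C : Type) (tau : A -> B) (f : A -> C).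
Hypothesis finj : injective f.

Definition sum_pushout : Type := (B + {c : C | outside_image f c})%type.

Definition sum_pushout_in (c : C) : sum_pushout :=
  match excluded_middle_informative (exists a, f a = c) with
  | left e => inl (tau (proj1_sig (constructive_indefinite_description _ e)))
  | right cout => inr (exist _ c cout)
  end.

Lemma sum_pushout_in_image a : sum_pushout_in (f a) = inl (tau a).
Proof.
rewrite /sum_pushout_in; case: excluded_middle_informative => [e|]; last by case; exists a.
by case: constructive_indefinite_description => a' /= /finj ->.
Qed.

Lemma sum_pushout_in_outside c (cout : outside_image f c) :
  sum_pushout_in c = inr (exist _ c cout).
Proof.
rewrite /sum_pushout_in; case: excluded_middle_informative => [//|cout'].
by rewrite (proof_irrelevance _ cout' cout).
Qed.

Lemma sum_pushoutP : set_pushout tau f sum_pushout_in inl.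
Proof.
split=> [a|X g1 g2 g12]; first by rewrite sum_pushout_in_image.
split.
- exists (fun x => match x with inl b => g2 b | inr (exist c _) => g1 c end).
  split=> [c|//]; have [[a <-]|cout] := classic (exists a, f a = c).
  + by rewrite sum_pushout_in_image g12.
  + by rewrite (sum_pushout_in_outside cout).
- move=> u v u1 u2 v1 v2 [b|[c cout]]; first by rewrite u2 v2.
  by rewrite -(sum_pushout_in_outside cout) u1 v1.
Qed.

End SumPushout.

Theorem mainTheorem2 (S : signature) (NL NR NG : Type)
  (L : graph S NL) (R : graph S NR) (G : graph S NG)
  (tau : NL -> NR) (m : NL -> NG) (hm : is_morph L G m) (minj : injective m) :
  (exists (NH : Type) (H : graph S NH) (tau1 : NG -> NH) (d : NR -> NH),
      het_pushout L R G tau m H tau1 d) /\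
  (forall (NH : Type) (tau1 : NG -> NH) (delta : NR -> NH),
      set_pushout tau m tau1 delta ->
      exists H : graph S NH,
        ((forall n, outside_image m n -> strictly_graphic_at G H tau1 n) /\
         (forall r, strictly_graphic_at R H delta r)) /\
        (forall H' : graph S NH,
           (forall n, outside_image m n -> strictly_graphic_at G H' tau1 n) ->
           (forall r, strictly_graphic_at R H' delta r) ->
           forall x, glab H' x = glab H x) /\
        is_morph R H delta /\
        het_pushout L R G tau m H tau1 delta).
Proof.
split.
  have P := sum_pushoutP tau minj.
  exists (sum_pushout NR m), (pushout_graph R G m (sum_pushout_in tau m) inl).
  exists (sum_pushout_in tau m), inl.
  exact: (strict_extension_het_pushout L P (pushout_graph_strict_extension R G P minj)).
move=> NH tau1 delta P; exists (pushout_graph R G m tau1 delta).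
have SE := pushout_graph_strict_extension R G P minj.
split=> //; split=> [H' H'out H'r|].
  exact: (strict_extension_unique P SE (conj H'out H'r)).
split; first exact: is_morph_strictly_graphic SE.2.
exact: strict_extension_het_pushout.
Qed.
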